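(* Let $g_n$, $n\in\mathbb N$, be wasteful partial functions from $X^M$ to a set $Y$. Then there exist a set $A\subseteq X^M$ of width $1$, injective partial functions $g_n'\subseteq g_n$ ($n\in\mathbb N$) such that $A$ is the disjoint union of the sets $\operatorname{dom}(g_n')$, and partial functions $h_n$ from $X^M$ to $A$, such that $g_n=g_n'\circ h_n$ for all $n\in\mathbb N$.
   Context: $X=\omega\times\omega$, elements $(a|b)$ ($x$-coordinate $a$, $y$-coordinate $b$); $M=\{1,\dots,m\}$. Width of $Y\subseteq X$: $\sup_n|Y\cap(\omega\times\{n\})|$; the width of a set $A\subseteq X^M$ is the maximum of the widths of its projections onto the components $i\in M$. $B^M_k=\{u\in X^M:\exists i\in M\,((u_i)^y<k)\}$; a subset of $X^M$ is bounded iff contained in some $B^M_k$. A partial function $p$ from $X^M$ to $Y$ is wasteful iff $p^{-1}[d]$ is unbounded for every $d\in\operatorname{ran}(p)$. Composition of partial functions: $(g\circ h)(u)$ is defined iff $h(u)$ is defined and lies in $\operatorname{dom}(g)$. *)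

From mathcomp Require Import all_boot.
Set Implicit Arguments. Unset Strict Implicit. Unset Printing Implicit Defensive.

(* X = omega x omega; a point (a|b) is the pair (a, b), x-coordinate a, y-coordinate b. *)
Definition X := (nat * nat)%type.
(* X^M with M = {1,...,m}, indexed here by 'I_m = {0,...,m-1}. *)
Definition XM (m : nat) := ('I_m -> X)%type.

Definition pfun (S T : Type) := S -> option T.

Definition dom {S T} (p : pfun S T) (u : S) : Prop := exists y, p u = Some y.

(* p ⊆ q as sets of pairs *)
Definition psub {S T} (p q : pfun S T) : Prop :=
  forall u y, p u = Some y -> q u = Some y.

Definition pinjective {S T} (p : pfun S T) : Prop :=
  forall u v y, p u = Some y -> p v = Some y -> u = v.

Definition pfcomp {S T U} (g : pfun T U) (h : pfun S T) : pfun S U :=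
  fun u => match h u with Some v => g v | None => None end.

Definition BMk (m k : nat) (u : XM m) : Prop := exists i : 'I_m, (u i).2 < k.

Definition bounded (m : nat) (S : XM m -> Prop) : Prop :=
  exists k, forall u, S u -> BMk k u.

Definition wasteful (m : nat) {Y} (p : pfun (XM m) Y) : Prop :=
  forall d, (exists u, p u = Some d) -> ~ bounded (fun u => p u = Some d).

(* |Z ∩ (omega x {n})| <= k *)
Definition row_card_le (Z : X -> Prop) (n k : nat) : Prop :=
  forall s : seq X, uniq s -> (forall x, x \in s -> Z x /\ x.2 = n) -> size s <= k.

Definition width_le (Z : X -> Prop) (k : nat) : Prop := forall n, row_card_le Z n k.

Definition proj (m : nat) (A : XM m -> Prop) (i : 'I_m) (x : X) : Prop :=
  exists u, A u /\ u i = x.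

Definition widthM_le (m : nat) (A : XM m -> Prop) (k : nat) : Prop :=
  forall i : 'I_m, width_le (proj A i) k.

(* Since X^m is countable, so is the set of "tasks": pairs
   (n, d) with d in the range of g n, each coded by a canonical point of the
   fibre g_n^{-1}[d].  Enumerate the tasks c = 0, 1, 2, ... and choose, by
   wastefulness, for task c = (n, d) a point a_c in g_n^{-1}[d] all of whose
   y-coordinates lie in a band [B_c, B_{c+1}); the bands are pairwise
   disjoint, so distinct a_c differ in the y-coordinate of EVERY component.
   Then A = {a_c}, g'_n is g_n restricted to the a_c belonging to tasks of
   the form (n, _), and h_n sends u to the point a_c of the task (n, g_n u). *)

From Stdlib Require Import ClassicalEpsilon Classical FunctionalExtensionality.
From mathcomp Require Import all_boot.
Set Implicit Arguments. Unset Strict Implicit. Unset Printing Implicit Defensive.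

(* An arbitrary point of X^m, used as the default value of choice functions. *)
Definition origin {m : nat} : XM m := fun _ => (0, 0).

(* A wasteful map has, in each non-empty fibre, points whose components all
   lie at height at least k: otherwise that fibre would be bounded by B^M_k. *)
Lemma wasteful_far (m : nat) (Y : Type) (p : pfun (XM m) Y) (d : Y) (k : nat) :
  wasteful p -> (exists u, p u = Some d) ->
  exists v, p v = Some d /\ forall i, k <= (v i).2.
Proof.
move=> Wp fibre; apply: NNPP => no_far; apply: (Wp d fibre); exists k => v pv.
apply: NNPP => not_low; apply: no_far; exists v; split => // i.
by rewrite leqNgt; apply/negP => low; apply: not_low; exists i.
Qed.

Definition far (m : nat) (Y : Type) (p : pfun (XM m) Y) (d : Y) (k : nat) : XM m :=
  epsilon (inhabits origin)
    (fun v => p v = Some d /\ forall i, k <= (v i).2).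

Lemma farP (m : nat) (Y : Type) (p : pfun (XM m) Y) (d : Y) (k : nat) :
  wasteful p -> (exists u, p u = Some d) ->
  p (far p d k) = Some d /\ forall i, k <= (far p d k i).2.
Proof.
move=> Wp fibre; apply: (epsilon_spec _ (fun v => p v = Some d /\ forall i, k <= (v i).2)).
exact: wasteful_far.
Qed.

(* A canonical representative of the fibre p^{-1}[d]; it codes the value d. *)
Definition rep (m : nat) (Y : Type) (p : pfun (XM m) Y) (d : Y) : XM m :=
  epsilon (inhabits origin) (fun u => p u = Some d).

Lemma repP (m : nat) (Y : Type) (p : pfun (XM m) Y) (u : XM m) (d : Y) :
  p u = Some d -> p (rep p d) = Some d.
Proof. by move=> pu; apply: (epsilon_spec _ (fun v => p v = Some d)); exists u. Qed.

Lemma width1_of_rows (Z : X -> Prop) :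
  (forall x y, Z x -> Z y -> x.2 = y.2 -> x = y) -> width_le Z 1.
Proof.
move=> row_inj r [|x [|y s]] //= uniq_s in_row; exfalso.
have [Zx xr] := in_row x (mem_head _ _).
have [Zy yr] : Z y /\ y.2 = r by apply: in_row; rewrite !inE eqxx orbT.
by move: uniq_s; rewrite (row_inj x y Zx Zy) ?xr ?yr // inE eqxx.
Qed.

(* The staircase: given, for each index c and threshold b, a point pt c b
   which (for active c) lies entirely at height >= b, choose the thresholds
   level c so that the c-th chosen point lies strictly below level c.+1. *)
Section Staircase.
Variables (m : nat) (pt : nat -> nat -> XM m) (active : nat -> Prop).
Hypothesis pt_above : forall c b i, active c -> b <= (pt c b i).2.

Fixpoint level (c : nat) : nat :=
  if c is c'.+1 then level c' + 1 + \sum_(i < m) (pt c' (level c') i).2 else 0.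

Definition stair (c : nat) : XM m := pt c (level c).

Lemma stair_below (c : nat) (i : 'I_m) : (stair c i).2 < level c.+1.
Proof.
rewrite /= -addnA add1n; apply: ltn_addl.
by rewrite ltnS (bigD1 i) //= leq_addr.
Qed.

Lemma level_mono : {homo level : c c' / c <= c'}.
Proof. by apply: homo_leq => [//|c1 c2 c3|c]; [exact: leq_trans|rewrite /= -addnA leq_addr]. Qed.

Lemma stair_lt (c c' : nat) (i : 'I_m) :
  c < c' -> active c' -> (stair c i).2 < (stair c' i).2.
Proof.
move=> lt_cc' act; apply: leq_trans (stair_below c i) _.
exact: leq_trans (level_mono lt_cc') (pt_above _ i act).
Qed.

Lemma stair_inj (c c' : nat) (i : 'I_m) :
  active c -> active c' -> (stair c i).2 = (stair c' i).2 -> c = c'.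
Proof.
move=> act act' same; case: (ltngtP c c') => // lt.
- by have := stair_lt i lt act'; rewrite same ltnn.
- by have := stair_lt i lt act; rewrite same ltnn.
Qed.

End Staircase.

Section Construction.
Variables (m : nat) (Y : Type) (g : nat -> pfun (XM m) Y).

(* The task (n, d) is coded by the pair (n, rep (g n) d) of the countable
   type nat * X^m; task decodes, failing on non-canonical codes. *)
Definition code (n : nat) (d : Y) : nat := pickle (n, [ffun i => rep (g n) d i]).

Definition task (c : nat) : option (nat * Y) :=
  if @pickle_inv (nat * {ffun 'I_m -> X})%type c is Some (n, f) then
    if g n (fun i => f i) is Some d then
      if [ffun i => rep (g n) d i] == f then Some (n, d) else None
    else None
  else None.

Lemma task_code (n : nat) (u : XM m) (d : Y) :
  g n u = Some d -> task (code n d) = Some (n, d).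
Proof.
move=> gu; rewrite /task /code pickleK_inv.
have -> : (fun i => [ffun i => rep (g n) d i] i) = rep (g n) d.
  by apply: functional_extensionality => i; rewrite ffunE.
by rewrite (repP gu) eqxx.
Qed.

Lemma task_inj (c c' : nat) (nd : nat * Y) :
  task c = Some nd -> task c' = Some nd -> c = c'.
Proof.
rewrite /task.
have K := @pickle_invK (nat * {ffun 'I_m -> X})%type c.
have K' := @pickle_invK (nat * {ffun 'I_m -> X})%type c'.
case: (pickle_inv c) K => [[n f]|] //= K; case: (g n _) => [d|] //.
case: ifP => // /eqP rep_f [<-].
case: (pickle_inv c') K' => [[n' f']|] //= K'; case: (g n' _) => [d'|] //.
case: ifP => // /eqP rep_f' [En Ed]; subst n' d'.
by rewrite -K -K' -rep_f -rep_f'.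
Qed.

Lemma task_fibre (c n : nat) (d : Y) :
  task c = Some (n, d) -> exists u, g n u = Some d.
Proof.
rewrite /task; case: (pickle_inv c) => [[n' f]|] //.
case gf: (g n' _) => [d'|] //; case: ifP => // _ [<- <-]; by exists (fun i => f i).
Qed.

Definition active (c : nat) : Prop := exists nd, task c = Some nd.

Definition point (c b : nat) : XM m :=
  if task c is Some (n, d) then far (g n) d b else origin.

Definition anchor (c : nat) : XM m := stair point c.

(* The set A, the restrictions g'_n and the maps h_n of the theorem. *)
Definition cover (v : XM m) : Prop := exists c, active c /\ v = anchor c.

Definition grestr (n : nat) (v : XM m) : option Y :=
  if excluded_middle_informative (exists c d, task c = Some (n, d) /\ v = anchor c)
  then g n v else None.

Definition route (n : nat) (u : XM m) : option (XM m) :=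
  if g n u is Some d then Some (anchor (code n d)) else None.

Hypothesis Hg : forall n, wasteful (g n).

Lemma point_above (c b : nat) (i : 'I_m) : active c -> b <= (point c b i).2.
Proof.
rewrite /point => -[[n d] T]; rewrite T.
by have [_ ->] := farP b (@Hg n) (task_fibre T).
Qed.

Lemma anchor_value (c n : nat) (d : Y) :
  task c = Some (n, d) -> g n (anchor c) = Some d.
Proof.
move=> T; rewrite /anchor /stair /point T.
by have [-> _] := farP (level point c) (@Hg n) (task_fibre T).
Qed.

Lemma anchor_inj (c c' : nat) (i : 'I_m) :
  active c -> active c' -> (anchor c i).2 = (anchor c' i).2 -> c = c'.
Proof. exact: (stair_inj (@point_above)). Qed.

Lemma grestrE (n : nat) (v : XM m) (y : Y) :
  grestr n v = Some y <-> exists c, task c = Some (n, y) /\ v = anchor c.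
Proof.
rewrite /grestr; case: excluded_middle_informative => [anchored|none] /=.
- have [c [d [T ->]]] := anchored; split => [gy|[c' [T' ->]]].
  + by exists c; move: gy; rewrite (anchor_value T) => -[<-].
  + exact: anchor_value T'.
- by split => // -[c [T Ev]]; case: none; exists c, y.
Qed.

Lemma grestr_sub (n : nat) : psub (grestr n) (g n).
Proof. by move=> v y /grestrE [c [T ->]]; apply: anchor_value. Qed.

(* ... and injective, since a value y has the single anchor of task (n, y). *)
Lemma grestr_inj (n : nat) : pinjective (grestr n).
Proof.
move=> u v y /grestrE [c [T ->]] /grestrE [c' [T' ->]].
by rewrite (task_inj T T').
Qed.

Lemma cover_dom (u : XM m) : cover u <-> exists n, dom (grestr n) u.
Proof.
split => [[c [[[n d] T] ->]]|[n [y /grestrE [c [T ->]]]]].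
- by exists n, d; apply/grestrE; exists c.
- by exists c; split => //; exists (n, y).
Qed.

(* ... and that union is disjoint (this needs a component, i.e. m > 0). *)
Lemma grestr_disjoint (i0 : 'I_m) (n k : nat) (u : XM m) :
  n <> k -> dom (grestr n) u -> dom (grestr k) u -> False.
Proof.
move=> nk [y /grestrE [c [T ->]]] [y' /grestrE [c' [T' same]]].
have cc' : c = c'.
  by apply: (anchor_inj (i := i0)); [exists (n, y)|exists (k, y')|rewrite same].
by move: T'; rewrite -cc' T => -[].
Qed.

Lemma cover_width : widthM_le cover 1.
Proof.
move=> i; apply: width1_of_rows.
move=> _ _ [_ [[c [act ->]] <-]] [_ [[c' [act' ->]] <-]] same.
by rewrite (anchor_inj act act' same).
Qed.

Lemma route_cover (n : nat) (u v : XM m) : route n u = Some v -> cover v.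
Proof.
rewrite /route; case gu: (g n u) => [d|] // [<-].
by exists (code n d); split => //; exists (n, d); apply: task_code gu.
Qed.

Lemma route_factor (n : nat) (u : XM m) : g n u = pfcomp (grestr n) (route n) u.
Proof.
rewrite /pfcomp /route; case gu: (g n u) => [d|] //.
by symmetry; apply/grestrE; exists (code n d); rewrite (task_code gu).
Qed.

End Construction.

Theorem mainTheorem5 (m : nat) (Hm : 0 < m) (Y : Type)
  (g : nat -> pfun (XM m) Y) (Hg : forall n, wasteful (g n)) :
  exists (A : XM m -> Prop) (g' : nat -> pfun (XM m) Y) (h : nat -> pfun (XM m) (XM m)),
    widthM_le A 1 /\
    (forall n, psub (g' n) (g n) /\ pinjective (g' n)) /\
    (forall u, A u <-> exists n, dom (g' n) u) /\
    (forall n k u, n <> k -> dom (g' n) u -> dom (g' k) u -> False) /\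
    (forall n u v, h n u = Some v -> A v) /\
    (forall n u, g n u = pfcomp (g' n) (h n) u).
Proof.
exists (cover g), (grestr g), (route g).
split; first exact: cover_width.
split; first by move=> n; split; [apply: grestr_sub|apply: grestr_inj].
split; first exact: cover_dom.
split; first exact: (grestr_disjoint Hg (Ordinal Hm)).
split; first exact: route_cover.
exact: route_factor.
Qed.
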